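(* Let $\alpha$ be an ordinal and let $\mathcal{X},\mathcal{Y}$ be families of metric spaces with $\mathcal{X},\mathcal{Y}\in\mathfrak{C}_\alpha$. Then $\mathcal{X}\otimes\mathcal{Y}\in\mathfrak{C}_\alpha$.
   Context: $\mathcal{X}\otimes\mathcal{Y}=\{X\times Y\colon X\in\mathcal{X},Y\in\mathcal{Y}\}$, where $X\times Y$ carries the metric $d((x,y),(x',y'))=\sqrt{d_X(x,x')^2+d_Y(y,y')^2}$. A family $\mathcal{U}$ of metric subspaces of a metric space $(X,d)$ is $r$-disjoint if $d(x,y)>r$ whenever $x\in U$, $y\in U'$, $U\neq U'$ in $\mathcal{U}$. For families $\mathcal{X},\mathcal{Y}$ and $R\in\mathbb{R}^{\mathbb{N}}$, $\mathcal{X}\xrightarrow{R}\mathcal{Y}$ means: there is an integer $k$ such that for each $X\in\mathcal{X}$ there are subcollections $\mathcal{U}_1,\dots,\mathcal{U}_k\subseteq\mathcal{Y}$ of subspaces of $X$, each $\mathcal{U}_i$ being $R_i$-disjoint, with $\bigcup_i\mathcal{U}_i$ covering $X$. A family is bounded if the diameters of its members are uniformly bounded. $\mathfrak{C}_0$ is the class of bounded families; for an ordinal $\alpha>0$, $\mathfrak{C}_\alpha$ is the class of families $\mathcal{X}$ such that for every $R\in\mathbb{R}^{\mathbb{N}}$ there exist $\beta<\alpha$ and $\mathcal{Y}\in\mathfrak{C}_\beta$ with $\mathcal{X}\xrightarrow{R}\mathcal{Y}$. *)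

From Stdlib Require Import Reals.
Open Scope R_scope.

Record mspace : Type := MSpace { carrier : Type; dist : carrier -> carrier -> R }.

Definition is_metric (M : mspace) : Prop :=
  (forall x y : carrier M, 0 <= dist M x y) /\
  (forall x y : carrier M, dist M x y = 0 <-> x = y) /\
  (forall x y : carrier M, dist M x y = dist M y x) /\
  (forall x y z : carrier M, dist M x z <= dist M x y + dist M y z).

Definition mfamily : Type := mspace -> Prop.

Definition family_of_metric_spaces (F : mfamily) : Prop :=
  forall M, F M -> is_metric M.

Definition subspace (M : mspace) (A : carrier M -> Prop) : mspace :=
  MSpace {x : carrier M | A x} (fun x y => dist M (proj1_sig x) (proj1_sig y)).

Definition isometric (M N : mspace) : Prop :=
  exists f : carrier M -> carrier N,
    (forall y, exists! x, f x = y) /\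
    (forall x y, dist N (f x) (f y) = dist M x y).

Definition subspace_in (F : mfamily) (M : mspace) (A : carrier M -> Prop) : Prop :=
  exists N, F N /\ isometric N (subspace M A).

Definition prod_space (X Y : mspace) : mspace :=
  MSpace (carrier X * carrier Y)
    (fun p q => sqrt (dist X (fst p) (fst q) ^ 2 + dist Y (snd p) (snd q) ^ 2)).

Definition tensor (FX FY : mfamily) : mfamily :=
  fun M => exists X Y, FX X /\ FY Y /\ M = prod_space X Y.

Definition r_disjoint (r : R) (M : mspace) (U : (carrier M -> Prop) -> Prop) : Prop :=
  forall A A', U A -> U A' -> ~ (forall x, A x <-> A' x) ->
    forall x y, A x -> A' y -> dist M x y > r.

(** 𝒳 --R--> 𝒴 (R : sequence of reals, used at indices 1..k). *)
Definition decomposes (Rs : nat -> R) (FX FY : mfamily) : Prop :=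
  exists k : nat, forall M, FX M ->
    exists U : nat -> (carrier M -> Prop) -> Prop,
      (forall i, (1 <= i <= k)%nat -> forall A, U i A -> subspace_in FY M A) /\
      (forall i, (1 <= i <= k)%nat -> r_disjoint (Rs i) M (U i)) /\
      (forall x, exists i, (1 <= i <= k)%nat /\ exists A, U i A /\ A x).

Definition bounded (F : mfamily) : Prop :=
  exists B : R, forall M, F M -> forall x y : carrier M, dist M x y <= B.

(** Ordinals are represented as elements of an arbitrary strict well-order
    [lt] on a type [O]. *)
Definition strict_well_order {O : Type} (lt : O -> O -> Prop) : Prop :=
  well_founded lt /\
  (forall a b c, lt a b -> lt b c -> lt a c) /\
  (forall a b, lt a b \/ a = b \/ lt b a).

(** The classes 𝔠_α: [DC lt a F] means F ∈ 𝔠_a.  Over a well-founded order the least fixed point below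
    is the transfinite-recursive definition. *)
Inductive DC {O : Type} (lt : O -> O -> Prop) : O -> mfamily -> Prop :=
| C_zero : forall a F, (forall b, ~ lt b a) -> bounded F -> DC lt a F
| C_succ : forall a F, (exists b, lt b a) ->
    (forall Rs : nat -> R, exists b G, lt b a /\ DC lt b G /\ decomposes Rs F G) ->
    DC lt a F.

(** At a non-minimal level and
    for a given [Rs], choose decompositions of [Y] for all sequences at once and
    cut the indices of [Rs] into consecutive blocks, block [i] being as long as
    the decomposition of [Y] along the tail of [Rs] after blocks [0 .. i-1] has
    pieces.  Decompose [X] along a sequence whose [i]-th term dominates [Rs] on
    blocks [0 .. i-1], and pair the [(i+1)]-th family of [X]-pieces with the
    [Y]-pieces of block [i].  Rectangles with different [X]-sides are far apart
    in the first coordinate, those with the same [X]-side in the second.  The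
    rectangles lie in the product of two families of lower level (the second a
    finite union), so the induction hypothesis applies. *)

From Stdlib Require Import Reals Lra Lia Classical ClassicalEpsilon ProofIrrelevance.
Open Scope R_scope.

Definition nonneg_dist (M : mspace) : Prop := forall x y : carrier M, 0 <= dist M x y.

Definition nonneg_part (F : mfamily) : mfamily := fun M => F M /\ nonneg_dist M.

Definition union (F G : mfamily) : mfamily := fun M => F M \/ G M.

Definition bigunion (G : nat -> mfamily) (n : nat) : mfamily :=
  fun M => exists i, (i <= n)%nat /\ G i M.

Definition is_decomposition (k : nat) (Rs : nat -> R) (G : mfamily) (M : mspace)
    (U : nat -> (carrier M -> Prop) -> Prop) : Prop :=
  (forall i, (1 <= i <= k)%nat -> forall A, U i A -> subspace_in G M A) /\
  (forall i, (1 <= i <= k)%nat -> r_disjoint (Rs i) M (U i)) /\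
  (forall x, exists i, (1 <= i <= k)%nat /\ exists A, U i A /\ A x).

Definition decomposes_in (k : nat) (Rs : nat -> R) (F G : mfamily) : Prop :=
  forall M, F M -> exists U, is_decomposition k Rs G M U.

Lemma isometric_nonneg_dist (M N : mspace) (A : carrier M -> Prop) :
  nonneg_dist M -> isometric N (subspace M A) -> nonneg_dist N.
Proof. intros HM [f [_ Hf]] x y. rewrite <- Hf. apply HM. Qed.

Lemma subspace_in_subfamily (G G' : mfamily) (M : mspace) (A : carrier M -> Prop) :
  (forall N, G N -> G' N) -> subspace_in G M A -> subspace_in G' M A.
Proof. intros HG [N [HN HI]]. exists N; auto. Qed.

Lemma subspace_in_nonneg_part (G : mfamily) (M : mspace) (A : carrier M -> Prop) :
  nonneg_dist M -> subspace_in G M A -> subspace_in (nonneg_part G) M A.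
Proof.
  intros HM [N [HN HI]]. exists N.
  split; [split; [exact HN | exact (isometric_nonneg_dist M N A HM HI)] | exact HI].
Qed.

Lemma is_decomposition_nonneg_part k Rs G M U :
  nonneg_dist M -> is_decomposition k Rs G M U ->
  is_decomposition k Rs (nonneg_part G) M U.
Proof.
  intros HM [Hin [Hdisj Hcov]]. split; [|split; assumption].
  intros i Hi A HA. apply subspace_in_nonneg_part; [exact HM | exact (Hin i Hi A HA)].
Qed.

Lemma is_decomposition_widen k k' Rs G G' M U :
  (k <= k')%nat -> (forall N, G N -> G' N) -> is_decomposition k Rs G M U ->
  is_decomposition k' Rs G' M (fun i A => (i <= k)%nat /\ U i A).
Proof.
  intros Hk HG [Hin [Hdisj Hcov]]. split; [|split].
  - intros i Hi A [Hik HA]. apply (subspace_in_subfamily G); auto.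
    apply (Hin i); [lia | exact HA].
  - intros i Hi A A' [Hik HA] [_ HA']. apply (Hdisj i); [lia | exact HA | exact HA'].
  - intros x. destruct (Hcov x) as [i [Hi [A [HA Hx]]]].
    exists i. split; [lia |]. exists A. split; [split; [lia | exact HA] | exact Hx].
Qed.

Lemma decomposes_union Rs F1 F2 G1 G2 :
  decomposes Rs F1 G1 -> decomposes Rs F2 G2 ->
  decomposes Rs (union F1 F2) (union G1 G2).
Proof.
  intros [k1 H1] [k2 H2]. exists (Nat.max k1 k2). intros M [HM | HM].
  - destruct (H1 M HM) as [U HU]. eexists.
    apply (is_decomposition_widen k1 _ Rs G1); [lia | now left | exact HU].
  - destruct (H2 M HM) as [U HU]. eexists.
    apply (is_decomposition_widen k2 _ Rs G2); [lia | now right | exact HU].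
Qed.

Lemma isometric_full_subspace (M : mspace) (A : carrier M -> Prop) :
  (forall x, A x) -> isometric M (subspace M A).
Proof.
  intros HA. exists (fun x => exist A x (HA x)). split; [| reflexivity].
  intros [y Hy]. exists y. split.
  - now apply subset_eq_compat.
  - intros x Hx. now apply (f_equal (@proj1_sig _ _)) in Hx.
Qed.

Lemma decomposes_refl Rs G : decomposes Rs G G.
Proof.
  exists 1%nat. intros M HM. exists (fun _ A => forall x, A x). split; [|split].
  - intros i _ A HA. exists M. split; [exact HM | now apply isometric_full_subspace].
  - intros i _ A A' HA HA' Hne. exfalso. apply Hne. intros x. split; auto.
  - intros x. exists 1%nat. split; [lia |]. exists (fun _ => True). auto.
Qed.

Lemma decomposes_subfamily Rs F F' G :
  (forall M, F' M -> F M) -> decomposes Rs F G -> decomposes Rs F' G.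
Proof. intros HF [k Hk]. exists k. auto. Qed.

Lemma bounded_tensor (FX FY : mfamily) :
  (forall M, FX M -> nonneg_dist M) -> (forall M, FY M -> nonneg_dist M) ->
  bounded FX -> bounded FY -> bounded (tensor FX FY).
Proof.
  intros HX HY [BX HBX] [BY HBY]. exists (sqrt (BX ^ 2 + BY ^ 2)).
  intros M [X [Y [HXX [HYY ->]]]] [x1 y1] [x2 y2]. simpl. apply sqrt_le_1_alt.
  pose proof (HBX X HXX x1 x2). pose proof (HBY Y HYY y1 y2).
  pose proof (HX X HXX x1 x2). pose proof (HY Y HYY y1 y2). nra.
Qed.


Definition rectangle {A B : Type} (U : A -> Prop) (V : B -> Prop) : A * B -> Prop :=
  fun p => U (fst p) /\ V (snd p).

Lemma sqrt_sum_sq_gt_l r s t : s > r -> sqrt (s ^ 2 + t ^ 2) > r.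
Proof.
  intros Hs. destruct (Rle_lt_dec s 0) as [Hs0 | Hs0].
  - pose proof (sqrt_pos (s ^ 2 + t ^ 2)). lra.
  - assert (H : sqrt (s ^ 2) <= sqrt (s ^ 2 + t ^ 2)) by (apply sqrt_le_1_alt; nra).
    rewrite sqrt_pow2 in H by lra. lra.
Qed.

Lemma sqrt_sum_sq_gt_r r s t : t > r -> sqrt (s ^ 2 + t ^ 2) > r.
Proof. rewrite Rplus_comm. apply sqrt_sum_sq_gt_l. Qed.

Lemma isometric_prod (X Y N1 N2 : mspace) (U : carrier X -> Prop) (V : carrier Y -> Prop) :
  isometric N1 (subspace X U) -> isometric N2 (subspace Y V) ->
  isometric (prod_space N1 N2) (subspace (prod_space X Y) (rectangle U V)).
Proof.
  intros [f [Hf_bij Hf_dist]] [g [Hg_bij Hg_dist]].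
  exists (fun p => exist (rectangle U V) (proj1_sig (f (fst p)), proj1_sig (g (snd p)))
                     (conj (proj2_sig (f (fst p))) (proj2_sig (g (snd p))))).
  split.
  - intros [[x y] [Hx Hy]].
    destruct (Hf_bij (exist _ x Hx)) as [n1 [Hn1 Hf_inj]].
    destruct (Hg_bij (exist _ y Hy)) as [n2 [Hn2 Hg_inj]].
    exists (n1, n2). split.
    + apply eq_sig_hprop; [intros; apply proof_irrelevance |]. simpl. now rewrite Hn1, Hn2.
    + intros [m1 m2] Hm. apply (f_equal (@proj1_sig _ _)) in Hm. simpl in Hm.
      injection Hm as E1 E2.
      f_equal; [apply Hf_inj | apply Hg_inj];
        (apply eq_sig_hprop; [intros; apply proof_irrelevance | assumption]).
  - intros [x1 y1] [x2 y2]. simpl.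
    pose proof (Hf_dist x1 x2) as E1. pose proof (Hg_dist y1 y2) as E2. simpl in E1, E2.
    now rewrite E1, E2.
Qed.

Section BlockRectangles.

Variables (X Y : mspace) (Rs RX : nat -> R) (k : nat) (off kY : nat -> nat).
Variables (GX : mfamily) (GY : nat -> mfamily).
Variables (UX : nat -> (carrier X -> Prop) -> Prop) (VY : nat -> nat -> (carrier Y -> Prop) -> Prop).

Hypothesis off_S : forall i, off (S i) = (off i + kY i)%nat.
Hypothesis RX_dominates : forall i m, (m <= off (S i))%nat -> Rs m <= RX (S i).
Hypothesis UX_dec : is_decomposition k RX GX X UX.
Hypothesis VY_dec : forall i, is_decomposition (kY i) (fun j => Rs (off i + j)%nat) (GY i) Y (VY i).

Definition block_rectangles (m : nat) (C : carrier X * carrier Y -> Prop) : Prop :=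
  exists i, (S i <= k)%nat /\ (off i < m <= off (S i))%nat /\
    exists U V, UX (S i) U /\ VY i (m - off i)%nat V /\ C = rectangle U V.

Lemma off_monotone i i' : (i <= i')%nat -> (off i <= off i')%nat.
Proof. induction 1; [lia | rewrite off_S; lia]. Qed.

Lemma block_unique i i' m :
  (off i < m <= off (S i))%nat -> (off i' < m <= off (S i'))%nat -> i = i'.
Proof.
  intros Hi Hi'. destruct (Nat.lt_trichotomy i i') as [H | [H | H]]; [| exact H |].
  - pose proof (off_monotone (S i) i' H). lia.
  - pose proof (off_monotone (S i') i H). lia.
Qed.

Lemma block_rectangles_in m C : block_rectangles m C ->
  subspace_in (tensor GX (bigunion GY k)) (prod_space X Y) C.
Proof.
  intros [i [Hik [Hm [U [V [HU [HV ->]]]]]]].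
  destruct UX_dec as [HUX _]. destruct (VY_dec i) as [HVY _].
  rewrite off_S in Hm.
  destruct (HUX (S i) ltac:(lia) U HU) as [N1 [HN1 I1]].
  destruct (HVY (m - off i)%nat ltac:(lia) V HV) as [N2 [HN2 I2]].
  exists (prod_space N1 N2). split.
  - exists N1, N2. split; [exact HN1 | split; [exists i; split; [lia | exact HN2] | reflexivity]].
  - now apply isometric_prod.
Qed.

Lemma block_rectangles_disjoint m : r_disjoint (Rs m) (prod_space X Y) (block_rectangles m).
Proof.
  intros C C' [i [Hik [Hm [U [V [HU [HV ->]]]]]]] [i' [Hik' [Hm' [U' [V' [HU' [HV' ->]]]]]]]
    Hne [x y] [x' y'] [Hx Hy] [Hx' Hy'].
  pose proof (block_unique i i' m Hm Hm') as <-.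
  simpl in *. destruct (classic (forall x, U x <-> U' x)) as [HUU | HUU].
  - assert (HVV : ~ (forall y, V y <-> V' y)).
    { intros HVV. apply Hne. intros [x0 y0]. unfold rectangle. simpl.
      specialize (HUU x0). specialize (HVV y0). tauto. }
    destruct (VY_dec i) as [_ [HVY _]].
    rewrite off_S in Hm.
    pose proof (HVY (m - off i)%nat ltac:(lia) V V' HV HV' HVV y y' Hy Hy') as Hd.
    replace (off i + (m - off i))%nat with m in Hd by lia.
    now apply sqrt_sum_sq_gt_r.
  - destruct UX_dec as [_ [HUX _]].
    pose proof (HUX (S i) ltac:(lia) U U' HU HU' HUU x x' Hx Hx') as Hd.
    pose proof (RX_dominates i m ltac:(lia)).
    apply sqrt_sum_sq_gt_l. lra.
Qed.

Lemma block_rectangles_cover p : exists m, (1 <= m <= off k)%nat /\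
  exists C, block_rectangles m C /\ C p.
Proof.
  destruct p as [x y]. destruct UX_dec as [_ [_ HUX]].
  destruct (HUX x) as [[| i] [Hi [U [HU Hx]]]]; [lia |].
  destruct (VY_dec i) as [_ [_ HVY]].
  destruct (HVY y) as [j [Hj [V [HV Hy]]]].
  pose proof (off_S i). pose proof (off_monotone (S i) k ltac:(lia)).
  exists (off i + j)%nat. split; [lia |].
  exists (rectangle U V). split; [| split; assumption].
  exists i. split; [lia | split; [lia |]].
  exists U, V. split; [exact HU | split; [| reflexivity]].
  now replace (off i + j - off i)%nat with j by lia.
Qed.

Lemma is_decomposition_block_rectangles :
  is_decomposition (off k) Rs (tensor GX (bigunion GY k)) (prod_space X Y) block_rectangles.
Proof.
  split; [| split].
  - intros m _. apply block_rectangles_in.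
  - intros m _. apply block_rectangles_disjoint.
  - exact block_rectangles_cover.
Qed.

End BlockRectangles.

Definition shift (Rs : nat -> R) (n : nat) : nat -> R := fun j => Rs (n + j)%nat.

Fixpoint block_offset (K : (nat -> R) -> nat) (Rs : nat -> R) (i : nat) : nat :=
  match i with
  | 0 => 0%nat
  | S i => (block_offset K Rs i + K (shift Rs (block_offset K Rs i)))%nat
  end.

Fixpoint prefix_max (Rs : nat -> R) (n : nat) : R :=
  match n with
  | 0 => Rs 0%nat
  | S n => Rmax (prefix_max Rs n) (Rs (S n))
  end.

Lemma prefix_max_ge Rs m n : (m <= n)%nat -> Rs m <= prefix_max Rs n.
Proof.
  induction 1 as [| n _ IH].
  - destruct m; simpl; [lra | apply Rmax_r].
  - simpl. eapply Rle_trans; [exact IH | apply Rmax_l].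
Qed.

Lemma decomposes_tensor Rs (FX FY GX : mfamily) (K : (nat -> R) -> nat)
    (GY : (nat -> R) -> mfamily) (k : nat) :
  (forall M, FX M -> nonneg_dist M) -> (forall M, FY M -> nonneg_dist M) ->
  decomposes_in k (fun i => prefix_max Rs (block_offset K Rs i)) FX GX ->
  (forall S, decomposes_in (K S) S FY (GY S)) ->
  decomposes Rs (tensor FX FY)
    (tensor (nonneg_part GX)
       (bigunion (fun i => nonneg_part (GY (shift Rs (block_offset K Rs i)))) k)).
Proof.
  intros HX HY HdX HdY. exists (block_offset K Rs k).
  intros M [X [Y [HXX [HYY ->]]]].
  destruct (HdX X HXX) as [UX HUX].
  destruct (choice (fun i V => is_decomposition (K (shift Rs (block_offset K Rs i)))
                                 (shift Rs (block_offset K Rs i)) (GY (shift Rs (block_offset K Rs i))) Y V))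
    as [VY HVY].
  { intros i. exact (HdY _ Y HYY). }
  eexists. apply is_decomposition_block_rectangles
    with (RX := fun i => prefix_max Rs (block_offset K Rs i))
         (kY := fun i => K (shift Rs (block_offset K Rs i))).
  - reflexivity.
  - intros i m Hm. now apply prefix_max_ge.
  - apply is_decomposition_nonneg_part; [exact (HX X HXX) | exact HUX].
  - intros i. apply is_decomposition_nonneg_part; [exact (HY Y HYY) | exact (HVY i)].
Qed.

Section Levels.

Variables (O : Type) (lt : O -> O -> Prop).
Hypothesis lt_wf : well_founded lt.
Hypothesis lt_trans : forall a b c, lt a b -> lt b c -> lt a c.
Hypothesis lt_total : forall a b, lt a b \/ a = b \/ lt b a.

Lemma DC_minimal_bounded a F : (forall b, ~ lt b a) -> DC lt a F -> bounded F.
Proof.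
  intros Hmin HF. revert Hmin.
  destruct HF as [a' F' _ HB | a' F' [b Hb] _]; intros Hmin; [exact HB | now destruct (Hmin b)].
Qed.

Lemma DC_decomposes a F : (exists b, lt b a) -> DC lt a F ->
  forall Rs, exists b G, lt b a /\ DC lt b G /\ decomposes Rs F G.
Proof.
  intros Hex HF. revert Hex.
  destruct HF as [a' F' Hmin _ | a' F' _ Hdec]; intros [b Hb]; [now destruct (Hmin b) | exact Hdec].
Qed.

Lemma DC_subfamily a F G : DC lt a F -> (forall M, G M -> F M) -> DC lt a G.
Proof.
  intros [a' F' Hmin [B HB] | a' F' Hex Hdec] HG.
  - apply C_zero; [exact Hmin |]. exists B. auto.
  - apply C_succ; [exact Hex |]. intros Rs.
    destruct (Hdec Rs) as [b [G' [Hb [HG' Hd]]]].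
    exists b, G'. split; [exact Hb | split; [exact HG' |]].
    exact (decomposes_subfamily Rs F' G G' HG Hd).
Qed.

Lemma DC_monotone b c G : DC lt b G -> b = c \/ lt b c -> DC lt c G.
Proof.
  intros HG [<- | Hbc]; [exact HG |].
  apply C_succ; [now exists b |]. intros Rs.
  destruct (classic (exists b', lt b' b)) as [Hex | Hmin].
  - destruct (DC_decomposes b G Hex HG Rs) as [b' [G' [Hb' [HG' Hd]]]].
    exists b', G'. split; [eauto | auto].
  - exists b, G. split; [exact Hbc | split; [exact HG | apply decomposes_refl]].
Qed.

Lemma lt_upper_bound a b1 b2 : lt b1 a -> lt b2 a ->
  exists c, lt c a /\ (b1 = c \/ lt b1 c) /\ (b2 = c \/ lt b2 c).
Proof.
  intros H1 H2. destruct (lt_total b1 b2) as [H | [<- | H]].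
  - exists b2. auto.
  - exists b1. auto.
  - exists b1. auto.
Qed.

Lemma DC_union a F G : DC lt a F -> DC lt a G -> DC lt a (union F G).
Proof.
  revert F G. induction a as [a IH] using (well_founded_ind lt_wf). intros F G HF HG.
  destruct (classic (exists b, lt b a)) as [Hex | Hmin].
  - apply C_succ; [exact Hex |]. intros Rs.
    destruct (DC_decomposes a F Hex HF Rs) as [b1 [F' [Hb1 [HF' Hd1]]]].
    destruct (DC_decomposes a G Hex HG Rs) as [b2 [G' [Hb2 [HG' Hd2]]]].
    destruct (lt_upper_bound a b1 b2 Hb1 Hb2) as [c [Hc [Hc1 Hc2]]].
    exists c, (union F' G'). split; [exact Hc | split].
    + apply IH; [exact Hc | eapply DC_monotone; eauto | eapply DC_monotone; eauto].
    + now apply decomposes_union.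
  - assert (Hmin' : forall b, ~ lt b a) by (intros b Hb; apply Hmin; now exists b).
    apply C_zero; [exact Hmin' |].
    destruct (DC_minimal_bounded a F Hmin' HF) as [BF HBF].
    destruct (DC_minimal_bounded a G Hmin' HG) as [BG HBG].
    exists (Rmax BF BG). intros M [HM | HM] x y.
    + eapply Rle_trans; [apply HBF, HM | apply Rmax_l].
    + eapply Rle_trans; [apply HBG, HM | apply Rmax_r].
Qed.

Lemma DC_bigunion a (Z : nat -> mfamily) :
  (forall i, exists b, lt b a /\ DC lt b (Z i)) ->
  forall n, exists b, lt b a /\ DC lt b (bigunion Z n).
Proof.
  intros HZ n. induction n as [| n [b [Hb HD]]].
  - destruct (HZ 0%nat) as [b [Hb HD]]. exists b. split; [exact Hb |].
    apply (DC_subfamily b (Z 0%nat)); [exact HD |].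
    intros M [i [Hi HM]]. now replace i with 0%nat in HM by lia.
  - destruct (HZ (S n)) as [b' [Hb' HD']].
    destruct (lt_upper_bound a b b' Hb Hb') as [c [Hc [H1 H2]]].
    exists c. split; [exact Hc |].
    apply (DC_subfamily c (union (bigunion Z n) (Z (S n)))).
    + apply DC_union; eapply DC_monotone; eauto.
    + intros M [i [Hi HM]]. destruct (Nat.eq_dec i (S n)) as [-> | Hne].
      * now right.
      * left. exists i. split; [lia | exact HM].
Qed.

Lemma DC_decomposition_choice a F : (exists b, lt b a) -> DC lt a F ->
  exists (lev : (nat -> R) -> O) (G : (nat -> R) -> mfamily) (K : (nat -> R) -> nat),
    forall S, lt (lev S) a /\ DC lt (lev S) (G S) /\ decomposes_in (K S) S F (G S).
Proof.
  intros Hex HF.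
  destruct (choice (fun S (t : O * mfamily * nat) =>
              let '(b, G, k) := t in lt b a /\ DC lt b G /\ decomposes_in k S F G))
    as [ch Hch].
  { intros S. destruct (DC_decomposes a F Hex HF S) as [b [G [Hb [HG [k Hk]]]]].
    now exists (b, G, k). }
  exists (fun S => fst (fst (ch S))), (fun S => snd (fst (ch S))), (fun S => snd (ch S)).
  intros S. specialize (Hch S). now destruct (ch S) as [[b G] k].
Qed.

Lemma DC_tensor_nonneg a FX FY :
  (forall M, FX M -> nonneg_dist M) -> (forall M, FY M -> nonneg_dist M) ->
  DC lt a FX -> DC lt a FY -> DC lt a (tensor FX FY).
Proof.
  revert FX FY. induction a as [a IH] using (well_founded_ind lt_wf).
  intros FX FY HX HY HCX HCY.
  destruct (classic (exists b, lt b a)) as [Hex | Hmin].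
  2: { assert (Hmin' : forall b, ~ lt b a) by (intros b Hb; apply Hmin; now exists b).
       apply C_zero; [exact Hmin' |].
       apply bounded_tensor; [exact HX | exact HY | |]; now apply (DC_minimal_bounded a). }
  apply C_succ; [exact Hex |]. intros Rs.
  destruct (DC_decomposition_choice a FY Hex HCY) as [lev [GY [K HGY]]].
  destruct (DC_decomposes a FX Hex HCX (fun i => prefix_max Rs (block_offset K Rs i)))
    as [b1 [GX [Hb1 [HGX [k HdX]]]]].
  set (ZY := fun i => nonneg_part (GY (shift Rs (block_offset K Rs i)))).
  destruct (DC_bigunion a ZY) with k as [b2 [Hb2 HZY]].
  { intros i. destruct (HGY (shift Rs (block_offset K Rs i))) as [Hlev [HG _]].
    exists (lev (shift Rs (block_offset K Rs i))). split; [exact Hlev |].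
    apply (DC_subfamily _ _ _ HG). now intros M [HM _]. }
  destruct (lt_upper_bound a b1 b2 Hb1 Hb2) as [c [Hc [Hc1 Hc2]]].
  exists c, (tensor (nonneg_part GX) (bigunion ZY k)). split; [exact Hc | split].
  - apply IH; [exact Hc | now intros M [_ HM] | now intros M [i [_ [_ HM]]] | |].
    + apply (DC_monotone b1); [| exact Hc1].
      apply (DC_subfamily b1 GX); [exact HGX | now intros M [HM _]].
    + exact (DC_monotone b2 c _ HZY Hc2).
  - apply decomposes_tensor; [exact HX | exact HY | exact HdX | intros S; apply HGY].
Qed.

End Levels.

Theorem mainTheorem10 (O : Type) (lt : O -> O -> Prop) (Hwo : strict_well_order lt)
  (a : O) (FX FY : mfamily)
  (HX : family_of_metric_spaces FX) (HY : family_of_metric_spaces FY)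
  (HCX : DC lt a FX) (HCY : DC lt a FY) :
  DC lt a (tensor FX FY).
Proof.
  destruct Hwo as [lt_wf [lt_trans lt_total]].
  apply DC_tensor_nonneg; [exact lt_wf | exact lt_trans | exact lt_total | | | exact HCX | exact HCY].
  - intros M HM. exact (proj1 (HX M HM)).
  - intros M HM. exact (proj1 (HY M HM)).
Qed.
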